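(* Equip $\mathbb R^{n\times n}$ with the Frobenius metric $g(X,Y)=\langle X,Y\rangle_F$, and equip $\mathbb R^\ell$ with the metric $g^A$ induced by the map $A:\mathbb R^\ell\to\mathbb R^{n\times n}$, $A(x)=A_0+\sum_{i=1}^\ell x_iA_i$. Then $g^A_x(u,v)=u^TBv$ for all $x,u,v\in\mathbb R^\ell$, and the Riemannian gradient of $F$ with respect to $g^A$ is $\nabla_{g^A}F(x)=B^{-1}\nabla F(x)$. Consequently the Riemannian gradient descent iteration $x^{k+1}=x^k-\nabla_{g^A}F(x^k)$ on $(\mathbb R^\ell,g^A)$ coincides with the Lift and Projection iteration: given $x^k$ and $\rho$, with $Z^k=(Q_1\;Q_2)\operatorname{diag}(\Lambda^*,\Lambda_2)(Q_1\;Q_2)^T$ and $x^{k+1}$ the minimiser of $\|Z^k-A(x)\|_F$ over $x\in\mathbb R^\ell$, one has $x^{k+1}=x^k-\nabla_{g^A}F(x^k)$.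
   Context: $A_0,\dots,A_\ell\in\mathbb R^{n\times n}$ are linearly independent real symmetric matrices; $\lambda_1(x)\le\dots\le\lambda_n(x)$ are the eigenvalues of $A(x)$. Given real numbers $\lambda_1^*\le\dots\le\lambda_m^*$ ($m\le n$) and $\rho\in S_n$: $r_i(x)=\lambda_{\rho_i}(x)-\lambda_i^*$, $F(x)=\frac12\sum_{i=1}^m r_i(x)^2$, $\nabla F(x)$ its Euclidean gradient, $\nabla F(x)=J_r(x)^Tr(x)$ with $(J_r)_{ij}=q_i^TA_jq_i$ where $q_i$ is the unit eigenvector for $\lambda_{\rho_i}(x)$. $B\in\mathbb R^{\ell\times\ell}$, $B_{ij}=\langle A_i,A_j\rangle_F=\operatorname{Tr}(A_i^TA_j)$. $A(x^k)=(Q_1\;Q_2)\operatorname{diag}(\Lambda_1,\Lambda_2)(Q_1\;Q_2)^T$ is a spectral decomposition with $(Q_1\;Q_2)$ orthogonal, $\Lambda_1=\operatorname{diag}(\lambda_{\rho_1}(x^k),\dots,\lambda_{\rho_m}(x^k))$, $\Lambda_2=\operatorname{diag}(\lambda_{\rho_{m+1}}(x^k),\dots,\lambda_{\rho_n}(x^k))$, $\Lambda^*=\operatorname{diag}(\lambda_1^*,\dots,\lambda_m^* )$. The induced metric is $g^A_x(u,v)=g(DA(x)[u],DA(x)[v])$, and the Riemannian gradient $\nabla_{g^A}F$ is defined by $DF(x)[v]=g^A_x(v,\nabla_{g^A}F(x))$ for all $v$. *)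

From HB Require Import structures.
From mathcomp Require Import all_boot all_order all_algebra fingroup perm.
From mathcomp Require Import all_classical all_reals all_analysis.
Set Implicit Arguments. Unset Strict Implicit. Unset Printing Implicit Defensive.
Import Order.TTheory GRing.Theory Num.Theory.
Import numFieldNormedType.Exports.
Local Open Scope ring_scope.
Local Open Scope classical_set_scope.

Section Defs.
Variable R : realType.

Definition frob {n : nat} (X Y : 'M[R]_n) : R := \tr (X^T *m Y).
Definition frob_norm {n : nat} (X : 'M[R]_n) : R := Num.sqrt (frob X X).

Definition sorted_eigs {n : nat} (M : 'M[R]_n) (s : seq R) : Prop :=
  sorted <=%R s /\ char_poly M = \prod_(a <- s) ('X - a%:P).

(* lambda_i(M): the i-th smallest eigenvalue (0-based), i : 'I_n. *)
Definition eigval {n : nat} (M : 'M[R]_n) (i : 'I_n) : R :=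
  nth 0 (xget [::] (sorted_eigs M)) i.

Definition Amap {n l : nat} (A0 : 'M[R]_n) (As : 'I_l -> 'M[R]_n)
  (x : 'cV[R]_l) : 'M[R]_n := A0 + \sum_(i < l) x i ord0 *: As i.

Definition Bmat {n l : nat} (As : 'I_l -> 'M[R]_n) : 'M[R]_l :=
  \matrix_(i, j) frob (As i) (As j).

Definition gA {n l : nat} (A0 : 'M[R]_n) (As : 'I_l -> 'M[R]_n)
  (x u v : 'cV[R]_l) : R :=
  frob ('d (Amap A0 As) x u) ('d (Amap A0 As) x v).

Definition Fobj {m p l : nat} (A0 : 'M[R]_(m + p)) (As : 'I_l -> 'M[R]_(m + p))
  (rho : 'S_(m + p)) (lstar : 'I_m -> R) (x : 'cV[R]_l) : R :=
  2^-1 * \sum_(i < m) (eigval (Amap A0 As x) (rho (lshift p i)) - lstar i) ^+ 2.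

Definition resid {m p l : nat} (A0 : 'M[R]_(m + p)) (As : 'I_l -> 'M[R]_(m + p))
  (rho : 'S_(m + p)) (lstar : 'I_m -> R) (x : 'cV[R]_l) : 'cV[R]_m :=
  \col_i (eigval (Amap A0 As x) (rho (lshift p i)) - lstar i).

Definition Jr {m p l : nat} (As : 'I_l -> 'M[R]_(m + p)) (Q1 : 'M[R]_(m + p, m))
  : 'M[R]_(m, l) :=
  \matrix_(i, j) ((col i Q1)^T *m As j *m col i Q1) ord0 ord0.

Definition gradF {m p l : nat} (A0 : 'M[R]_(m + p)) (As : 'I_l -> 'M[R]_(m + p))
  (rho : 'S_(m + p)) (lstar : 'I_m -> R) (Q1 : 'M[R]_(m + p, m)) (x : 'cV[R]_l)
  : 'cV[R]_l := (Jr As Q1)^T *m resid A0 As rho lstar x.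

End Defs.

From HB Require Import structures.
From mathcomp Require Import all_boot all_order all_algebra fingroup perm.
From mathcomp Require Import all_classical all_reals all_analysis.
Import Order.TTheory GRing.Theory Num.Theory.
Import numFieldNormedType.Exports.
Set Implicit Arguments.
Unset Strict Implicit.
Unset Printing Implicit Defensive.
Local Open Scope ring_scope.

(* Since [A] is affine, its derivative is the constant linear map
   [u |-> sum_i u_i A_i], so the pulled-back metric is the Gram matrix [B] and
   the Riemannian gradient is [B^-1 grad F].  The Lift and Projection step is a
   least-squares problem for the Frobenius norm, whose unique minimiser [y] is
   characterised by the normal equations [<A_j, Z - A(y)>_F = 0].  Writing
   [Z - A(x^k)] in the eigenbasis [Q] gives [<A_j, Z - A(x^k)>_F = -(J_r^T r)_j],
   so the normal equations are solved by [y = x^k - B^-1 grad F(x^k)]. *)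

Section Frobenius.
Variables (R : realType) (n : nat).
Implicit Types (X Y Z : 'M[R]_n).

Lemma frobC X Y : frob X Y = frob Y X.
Proof. by rewrite /frob -mxtrace_tr trmx_mul trmxK. Qed.

Lemma frobDr X Y Z : frob X (Y + Z) = frob X Y + frob X Z.
Proof. by rewrite /frob mulmxDr mxtraceD. Qed.

Lemma frobDl X Y Z : frob (X + Y) Z = frob X Z + frob Y Z.
Proof. by rewrite frobC frobDr !(frobC Z). Qed.

Lemma frobZr X a Y : frob X (a *: Y) = a * frob X Y.
Proof. by rewrite /frob -scalemxAr mxtraceZ. Qed.

Lemma frobBr X Y Z : frob X (Y - Z) = frob X Y - frob X Z.
Proof. by rewrite /frob mulmxBr raddfB. Qed.

Lemma frob0r X : frob X 0 = 0.
Proof. by rewrite /frob mulmx0 mxtrace0. Qed.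

Lemma frob_sumr X (I : Type) (r : seq I) (P : pred I) (F : I -> 'M[R]_n) :
  frob X (\sum_(i <- r | P i) F i) = \sum_(i <- r | P i) frob X (F i).
Proof. by rewrite /frob mulmx_sumr raddf_sum. Qed.

Lemma frobE X Y : frob X Y = \sum_i \sum_j X i j * Y i j.
Proof.
rewrite /frob /mxtrace exchange_big; apply: eq_bigr => j _.
by rewrite mxE; apply: eq_bigr => i _; rewrite mxE.
Qed.

Lemma frob_ge0 X : 0 <= frob X X.
Proof. by rewrite frobE; do 2![apply: sumr_ge0 => ? _]; rewrite -expr2 sqr_ge0. Qed.

Lemma frob_eq0 X : (frob X X == 0) = (X == 0).
Proof.
have sq_ge0 (i j : 'I_n) : 0 <= X i j * X i j by rewrite -expr2 sqr_ge0.
rewrite frobE psumr_eq0 => [|i _]; last exact: sumr_ge0.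
apply/allP/eqP => [X0|-> i _]; last first.
  by rewrite implyTb big1 // => j _; rewrite mxE mulr0.
apply/matrixP => i j; move: (X0 i (mem_index_enum _)).
rewrite implyTb psumr_eq0 // => /allP/(_ j (mem_index_enum _)).
by rewrite implyTb mxE -expr2 sqrf_eq0 => /eqP.
Qed.

Lemma frob_norm_le X Y : (frob_norm X <= frob_norm Y) = (frob X X <= frob Y Y).
Proof. by rewrite ler_sqrt ?frob_ge0. Qed.

Lemma frob_pythagoras X Y :
  frob X Y = 0 -> frob (X + Y) (X + Y) = frob X X + frob Y Y.
Proof. by move=> XY0; rewrite frobDl !frobDr XY0 frobC XY0 !addr0 add0r. Qed.

Lemma frob_conj_diag (A Q : 'M[R]_n) (d : 'rV[R]_n) : A^T = A ->
  frob A (Q *m diag_mx d *m Q^T) =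
  \sum_k d 0 k * ((col k Q)^T *m A *m col k Q) 0 0.
Proof.
move=> symA; rewrite /frob symA mulmxA mxtrace_mulC !mulmxA mul_mx_diag.
apply: eq_bigr => k _; rewrite mxE mulrC; congr (_ * _).
by rewrite tr_col colE mulmxA -colE -!row_mul !mxE.
Qed.

End Frobenius.

Section AffineMatrixMap.
Variables (R : realType) (n l : nat) (As : 'I_l -> 'M[R]_n).

Definition Alin (x : 'cV[R]_l) : 'M[R]_n := \sum_(i < l) x i ord0 *: As i.

Lemma Alin_is_linear : linear Alin.
Proof.
move=> a u v; rewrite /Alin scaler_sumr -big_split; apply: eq_bigr => i _.
by rewrite !mxE scalerDl scalerA.
Qed.

HB.instance Definition _ :=
  GRing.isLinear.Build R 'cV[R]_l 'M[R]_n *:%R Alin Alin_is_linear.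

Lemma Alin_continuous : continuous Alin.
Proof.
have -> : Alin = \sum_(i < l) (fun x : 'cV[R]_l => x i ord0 *: As i).
  by rewrite fct_sumE.
elim/big_ind: _ => [|f g cf cg x|i _ x]; first exact: cst_continuous.
  by apply: continuousD; [apply: cf | apply: cg].
apply: (@continuous_comp _ _ _ (fun x : 'cV[R]_l => x i ord0) ( *:%R^~ (As i))).
  exact: coord_continuous.
exact: scalel_continuous.
Qed.

Lemma AmapE (A0 : 'M[R]_n) (x : 'cV[R]_l) : Amap A0 As x = A0 + Alin x.
Proof. by []. Qed.

Lemma diff_Amap (A0 : 'M[R]_n) (x : 'cV[R]_l) :
  'd (Amap A0 As) x = Alin :> ('cV[R]_l -> 'M[R]_n).
Proof.
have Alin_diff : is_diff x Alin Alin.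
  exact: DiffDef (linear_differentiable _ Alin_continuous) (diff_lin _ Alin_continuous).
have -> : Amap A0 As = cst A0 + Alin by apply/funext.
by rewrite diff_val add0r.
Qed.

Lemma frob_Alinr (X : 'M[R]_n) (c : 'cV[R]_l) :
  frob X (Alin c) = \sum_i c i ord0 * frob X (As i).
Proof. by rewrite frob_sumr; apply: eq_bigr => i _; rewrite frobZr. Qed.

Lemma frob_As_Alin (j : 'I_l) (c : 'cV[R]_l) :
  frob (As j) (Alin c) = (Bmat As *m c) j ord0.
Proof. by rewrite frob_Alinr mxE; apply: eq_bigr => i _; rewrite mxE mulrC. Qed.

Lemma frob_Alin (u v : 'cV[R]_l) :
  frob (Alin u) (Alin v) = (u^T *m Bmat As *m v) ord0 ord0.
Proof.
rewrite frobC frob_Alinr -mulmxA mxE; apply: eq_bigr => i _.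
by rewrite frobC frob_As_Alin !mxE.
Qed.

Lemma gA_Bmat (A0 : 'M[R]_n) (x : 'cV[R]_l) :
  gA A0 As x = fun u v => (u^T *m Bmat As *m v) ord0 ord0.
Proof. by apply/funext => u; apply/funext => v; rewrite /gA diff_Amap frob_Alin. Qed.

End AffineMatrixMap.

Lemma form_reprP (R : realType) (l : nat) (B : 'M[R]_l) (f : 'cV[R]_l -> R)
    (G w : 'cV[R]_l) :
  B \in unitmx -> (forall v, f v = (v^T *m G) ord0 ord0) ->
  (forall v, f v = (v^T *m B *m w) ord0 ord0) <-> w = invmx B *m G.
Proof.
move=> Bunit fG; split => [fBw | -> v]; last by rewrite fG -mulmxA mulKVmx.
suff -> : G = B *m w by rewrite mulKmx.
apply/matrixP => i j; rewrite (ord1 j).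
by have := fG (delta_mx i 0); rewrite fBw trmx_delta -mulmxA -!rowE !mxE.
Qed.

Section IndependentFamily.
Variables (R : realType) (n l : nat) (As : 'I_l -> 'M[R]_n).
Hypothesis As_free :
  forall c : 'I_l -> R, \sum_(i < l) c i *: As i = 0 -> forall i, c i = 0.

Lemma Alin_inj : injective (Alin As).
Proof.
move=> u v /eqP; rewrite -subr_eq0 -linearB => /eqP uv0.
apply/eqP; rewrite -subr_eq0; apply/eqP/matrixP => i j.
by rewrite (ord1 j) (As_free uv0) mxE.
Qed.

Lemma Bmat_unit : Bmat As \in unitmx.
Proof.
rewrite -row_free_unit; apply: inj_row_free => v vB0.
have : Alin As v^T = 0.
  by apply/eqP; rewrite -frob_eq0 frob_Alin trmxK vB0 mul0mx mxE.
rewrite -(linear0 (Alin As)) => /Alin_inj /(congr1 trmx).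
by rewrite trmxK trmx0.
Qed.

Lemma Amap_argminP (A0 Z : 'M[R]_n) (ys : 'cV[R]_l) :
  (forall j, frob (As j) (Z - Amap A0 As ys) = 0) ->
  forall y, (forall z, frob_norm (Z - Amap A0 As y) <= frob_norm (Z - Amap A0 As z))
            <-> y = ys.
Proof.
move=> normal_eq.
have residualE z : Z - Amap A0 As z = (Z - Amap A0 As ys) + Alin As (ys - z).
  by rewrite !AmapE linearB !opprD !addrA subrK.
have errE z : frob (Z - Amap A0 As z) (Z - Amap A0 As z) =
    frob (Z - Amap A0 As ys) (Z - Amap A0 As ys) +
    frob (Alin As (ys - z)) (Alin As (ys - z)).
  rewrite residualE frob_pythagoras // frob_Alinr big1 // => i _.
  by rewrite frobC normal_eq mulr0.
split => [ymin | -> z]; last first.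
  by rewrite frob_norm_le (errE z) lerDl frob_ge0.
have := ymin ys; rewrite frob_norm_le (errE y) gerDl => le_err0.
have : frob (Alin As (ys - y)) (Alin As (ys - y)) == 0.
  by rewrite eq_le le_err0 frob_ge0.
by rewrite frob_eq0 -(linear0 (Alin As)) => /eqP/Alin_inj/subr0_eq ->.
Qed.

End IndependentFamily.

Section LiftProjection.
Variables (R : realType) (m p l : nat).
Variables (A0 : 'M[R]_(m + p)) (As : 'I_l -> 'M[R]_(m + p)).
Variables (rho : 'S_(m + p)) (lstar : 'I_m -> R).
Hypothesis As_sym : forall i, (As i)^T = As i.
Hypothesis As_free :
  forall c : 'I_l -> R, \sum_(i < l) c i *: As i = 0 -> forall i, c i = 0.

Variables (xk : 'cV[R]_l) (Q1 : 'M[R]_(m + p, m)) (Q2 : 'M[R]_(m + p, p)).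
Let lam (i : 'I_(m + p)) := eigval (Amap A0 As xk) (rho i).
Let L2 : 'rV[R]_p := \row_j lam (rshift m j).
Let Q := row_mx Q1 Q2.
Hypothesis Ak_spectral : Amap A0 As xk =
  Q *m diag_mx (row_mx (\row_i lam (lshift p i)) L2) *m Q^T.
Let Z := Q *m diag_mx (row_mx (\row_i lstar i) L2) *m Q^T.

Lemma frob_lift_residual (j : 'I_l) :
  frob (As j) (Z - Amap A0 As xk) = - gradF A0 As rho lstar Q1 xk j ord0.
Proof.
rewrite Ak_spectral frobBr !frob_conj_diag // -sumrB big_split_ord /=.
rewrite [X in _ + X]big1 ?addr0 => [|k _]; last by rewrite !row_mxEr subrr.
rewrite mxE -sumrN; apply: eq_bigr => i _.
by rewrite !row_mxEl !mxE colKl -mulrBl -mulrN opprB mulrC.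
Qed.

Let xnext := xk - invmx (Bmat As) *m gradF A0 As rho lstar Q1 xk.

Lemma lift_projection_normal_eq (j : 'I_l) :
  frob (As j) (Z - Amap A0 As xnext) = 0.
Proof.
have Bunit : Bmat As \in unitmx := Bmat_unit As_free.
have -> : Z - Amap A0 As xnext =
    Z - Amap A0 As xk + Alin As (invmx (Bmat As) *m gradF A0 As rho lstar Q1 xk).
  by rewrite !AmapE linearB !opprD opprK !addrA.
by rewrite frobDr frob_lift_residual frob_As_Alin mulKVmx // addNr.
Qed.

Lemma lift_projection_argminP (y : 'cV[R]_l) :
  (forall z, frob_norm (Z - Amap A0 As y) <= frob_norm (Z - Amap A0 As z)) <->
  y = xnext.
Proof. exact (Amap_argminP As_free lift_projection_normal_eq y). Qed.

End LiftProjection.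

Theorem mainTheorem3 (R : realType) (m p l : nat)
  (A0 : 'M[R]_(m + p)) (As : 'I_l -> 'M[R]_(m + p))
  (rho : 'S_(m + p)) (lstar : 'I_m -> R) :
  A0^T = A0 -> (forall i, (As i)^T = As i) ->
  (forall (c0 : R) (c : 'I_l -> R),
     c0 *: A0 + \sum_(i < l) c i *: As i = 0 -> c0 = 0 /\ forall i, c i = 0) ->
  (forall i j : 'I_m, (i <= j)%N -> lstar i <= lstar j) ->
  (forall x u v : 'cV[R]_l,
     gA A0 As x u v = (u^T *m Bmat As *m v) ord0 ord0)
  /\
  (forall (x G : 'cV[R]_l),
     differentiable (Fobj A0 As rho lstar) x ->
     (forall v, 'd (Fobj A0 As rho lstar) x v = (v^T *m G) ord0 ord0) ->
     forall w : 'cV[R]_l,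
       (forall v, 'd (Fobj A0 As rho lstar) x v = gA A0 As x v w)
       <-> w = invmx (Bmat As) *m G)
  /\
  (forall (xk : 'cV[R]_l) (Q1 : 'M[R]_(m + p, m)) (Q2 : 'M[R]_(m + p, p)),
     let Q := row_mx Q1 Q2 in
     let L1 : 'rV[R]_m := \row_i eigval (Amap A0 As xk) (rho (lshift p i)) in
     let L2 : 'rV[R]_p := \row_j eigval (Amap A0 As xk) (rho (rshift m j)) in
     Q^T *m Q = 1%:M ->
     Amap A0 As xk = Q *m diag_mx (row_mx L1 L2) *m Q^T ->
     let Z := Q *m diag_mx (row_mx (\row_i lstar i) L2) *m Q^T in
     forall y : 'cV[R]_l,
       (forall z : 'cV[R]_l,
          frob_norm (Z - Amap A0 As y) <= frob_norm (Z - Amap A0 As z))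
       <-> y = xk - invmx (Bmat As) *m gradF A0 As rho lstar Q1 xk).
Proof.
move=> _ As_sym As_indep _.
have As_free c : \sum_(i < l) c i *: As i = 0 -> forall i, c i = 0.
  by move=> c0; apply: (As_indep 0 c _).2; rewrite scale0r add0r.
split; first by move=> x u v; rewrite gA_Bmat.
split=> [x G _ dF w | xk Q1 Q2 Q L1 L2 _ Ak_spectral Z y].
  by rewrite gA_Bmat; apply: form_reprP dF; apply: Bmat_unit.
exact: lift_projection_argminP.
Qed.
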